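(* Let $D$ be an integral domain and let $S\subseteq R(D)$ be a union of prime ideals of $R(D)$. Set $L(S):=\{0\neq x\in D\mid \frac1x\notin S\}\cup\{0\}$. Then $L(S)$ is both a subring of $D$ and a regular factroid of $D$.
   Context: For an integral domain $D$ with fraction field $F$, the reciprocal complement $R(D)$ is the subring of $F$ generated by all $1/d$, $d\in D\setminus\{0\}$. A factroid of $D$ is an additive subgroup $H$ of $D$ such that whenever $f,g\in D\setminus\{0\}$ with $fg\in H$, then $f,g\in H$. For $S\subseteq D$, $[S]_D$ is the smallest factroid of $D$ containing $S$. A factroid $H$ is regular if $\{y\in D\mid gy\in[gH]_D\}=H$ for every nonzero $g\in D$. *)

From HB Require Import structures.
From mathcomp Require Import all_boot all_order all_algebra.
Set Implicit Arguments. Unset Strict Implicit. Unset Printing Implicit Defensive.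
Import Order.TTheory GRing.Theory Num.Theory.
Local Open Scope ring_scope.

Section Defs.
Variable D : idomainType.
Local Notation F := {fraction D}.
Local Notation "x %:F" := (@tofrac D x).

Inductive in_recip_compl : F -> Prop :=
  | rc_gen (d : D) : d != 0 -> in_recip_compl (d%:F)^-1
  | rc_one : in_recip_compl 1
  | rc_sub x y : in_recip_compl x -> in_recip_compl y -> in_recip_compl (x - y)
  | rc_mul x y : in_recip_compl x -> in_recip_compl y -> in_recip_compl (x * y).

Definition prime_ideal_RD (P : F -> Prop) : Prop :=
  (forall x, P x -> in_recip_compl x) /\
  P 0 /\
  (forall x y, P x -> P y -> P (x - y)) /\
  (forall r x, in_recip_compl r -> P x -> P (r * x)) /\
  ~ P 1 /\
  (forall x y, in_recip_compl x -> in_recip_compl y -> P (x * y) -> P x \/ P y).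

Definition union_of_primes_RD (S : F -> Prop) : Prop :=
  exists (I : Type) (P : I -> F -> Prop),
    (forall i, prime_ideal_RD (P i)) /\
    (forall x, S x <-> exists i, P i x).

Definition L_of (S : F -> Prop) (x : D) : Prop :=
  (x != 0 /\ ~ S (x%:F)^-1) \/ x = 0.

Definition is_subring (A : D -> Prop) : Prop :=
  [/\ A 1, (forall x y, A x -> A y -> A (x - y)) &
      (forall x y, A x -> A y -> A (x * y))].

Definition is_add_subgroup (H : D -> Prop) : Prop :=
  H 0 /\ (forall x y, H x -> H y -> H (x - y)).

Definition is_factroid (H : D -> Prop) : Prop :=
  is_add_subgroup H /\
  (forall f g : D, f != 0 -> g != 0 -> H (f * g) -> H f /\ H g).

Definition factroid_gen (S : D -> Prop) (y : D) : Prop :=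
  forall H, is_factroid H -> (forall s, S s -> H s) -> H y.

Definition is_regular_factroid (H : D -> Prop) : Prop :=
  is_factroid H /\
  (forall g : D, g != 0 ->
     forall y : D, factroid_gen (fun z => exists h, H h /\ z = g * h) (g * y) <-> H y).

End Defs.

(* A nonzero x lies in L(S) iff 1/x avoids every prime P_i whose union is S, so L(S) is the
   intersection of the sets L(P) over single primes P, and it suffices to treat one prime.
   There the subring and factroid properties come from 1/(xy) = 1/x * 1/y and
   1/(x-y) * (1/y - 1/x) = 1/x * 1/y together with primality of P.
   For regularity, let g, y be nonzero with 1/y in P.  The z in D such that z/(gy) lies in
   the maximal ideal P R(D)_P of the localization form a factroid, and it contains gh for
   every h in L(P), since 1/h is outside P and 1/h * gh/(gy) = 1/y is in P.  So if gy were
   in [gL(P)]_D, then gy/(gy) = 1 would lie in P R(D)_P, which is absurd. *)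
From HB Require Import structures.
From mathcomp Require Import all_boot all_order all_algebra.
From mathcomp Require Import ring.
Set Implicit Arguments. Unset Strict Implicit. Unset Printing Implicit Defensive.
Import GRing.Theory.
Local Open Scope ring_scope.

Lemma invfM_sub (K : fieldType) (a b : K) :
  a != 0 -> b != 0 -> a - b != 0 -> a^-1 * b^-1 = (b^-1 - a^-1) * (a - b)^-1.
Proof. by move=> a0 b0 ab0; field; rewrite a0 b0 ab0. Qed.

Section Factroids.
Variable D : idomainType.

Lemma factroid_gen_sub (S : D -> Prop) s : S s -> factroid_gen S s.
Proof. by move=> Ss H _; apply. Qed.

Lemma regular_factroidP (H : D -> Prop) :
  is_factroid H ->
  (forall g, g != 0 -> forall y,
     factroid_gen (fun z => exists h, H h /\ z = g * h) (g * y) -> H y) ->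
  is_regular_factroid H.
Proof.
move=> fH regH; split=> // g g0 y; split; first exact: regH.
by move=> Hy; apply: factroid_gen_sub; exists y.
Qed.

End Factroids.

Section ReciprocalComplement.
Variable D : idomainType.
Local Notation "x %:F" := (@tofrac D x).
Local Notation RD := (@in_recip_compl D).

Lemma recip_compl0 : RD 0.
Proof. by rewrite -(subrr 1); apply: rc_sub; apply: rc_one. Qed.

Lemma recip_complN1 : RD (-1).
Proof. by rewrite -sub0r; apply: rc_sub; [apply: recip_compl0 | apply: rc_one]. Qed.

Lemma L_ofE (S : {fraction D} -> Prop) x : L_of S x <-> (x != 0 -> ~ S x%:F^-1).
Proof.
split=> [[[_ nSx] //|-> /eqP] //|nSx].
by have [->|x0] := eqVneq x 0; [right | left; split; last exact: nSx].
Qed.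

End ReciprocalComplement.

Section PrimeIdeal.
Variables (D : idomainType) (P : {fraction D} -> Prop).
Hypothesis HP : prime_ideal_RD P.
Local Notation "x %:F" := (@tofrac D x).
Local Notation RD := (@in_recip_compl D).

Lemma prime_idealRD0 : P 0.
Proof. by case: HP => _ [P0 _]. Qed.

Lemma prime_idealRDB u v : P u -> P v -> P (u - v).
Proof. by case: HP => _ [_ [PB _]]; apply: PB. Qed.

Lemma prime_idealRDMl r u : RD r -> P u -> P (r * u).
Proof. by case: HP => _ [_ [_ [PM _]]]; apply: PM. Qed.

Lemma prime_idealRD_neq1 : ~ P 1.
Proof. by case: HP => _ [_ [_ [_ [nP1 _]]]]. Qed.

Lemma prime_idealRDM u v : RD u -> RD v -> P (u * v) -> P u \/ P v.
Proof. by case: HP => _ [_ [_ [_ [_ Pprime]]]]; apply: Pprime. Qed.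

Lemma L_of_prime1 : L_of P 1.
Proof. by apply/L_ofE => _; rewrite rmorph1 invr1; apply: prime_idealRD_neq1. Qed.

Lemma L_of_primeN x : L_of P x -> L_of P (- x).
Proof.
move=> /L_ofE Lx; apply/L_ofE; rewrite oppr_eq0 => x0 Px; apply: (Lx x0).
have -> : x%:F^-1 = -1 * (- x)%:F^-1 by rewrite rmorphN invrN mulN1r opprK.
by apply: prime_idealRDMl; first exact: recip_complN1.
Qed.

Lemma L_of_primeM x y : L_of P x -> L_of P y -> L_of P (x * y).
Proof.
move=> /L_ofE Lx /L_ofE Ly; apply/L_ofE; rewrite mulf_eq0 negb_or => /andP[x0 y0].
rewrite rmorphM invfM => /prime_idealRDM[]; try exact: rc_gen.
- exact: Lx.
- exact: Ly.
Qed.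

Lemma L_of_primeB x y : L_of P x -> L_of P y -> L_of P (x - y).
Proof.
move=> Lx Ly; have [->|x0] := eqVneq x 0; first by rewrite sub0r; apply: L_of_primeN.
have [->|y0] := eqVneq y 0; first by rewrite subr0.
move: Lx Ly => /L_ofE Lx /L_ofE Ly; apply/L_ofE => xy0 Pxy.
have /prime_idealRDM[] : P (x%:F^-1 * y%:F^-1); try exact: rc_gen.
- have xyF0 : x%:F - y%:F != 0 by rewrite -rmorphB tofrac_eq0.
  rewrite invfM_sub ?tofrac_eq0 // -rmorphB.
  by apply: prime_idealRDMl Pxy; apply: rc_sub; apply: rc_gen.
- exact: Lx.
- exact: Ly.
Qed.

Lemma L_of_prime_dvdl f g : g != 0 -> L_of P (f * g) -> L_of P f.
Proof.
move=> g0 /L_ofE Lfg; apply/L_ofE => f0 Pf; apply: Lfg; first by rewrite mulf_neq0.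
by rewrite rmorphM invfM mulrC; apply: prime_idealRDMl Pf; apply: rc_gen.
Qed.

(* [in_loc_prime u] says that u lies in the maximal ideal P R(D)_P of the localization of
   R(D) at P, i.e. u = p/s with p in P and s in R(D) outside P. *)
Definition in_loc_prime (u : {fraction D}) : Prop :=
  exists s, [/\ RD s, ~ P s & P (s * u)].

Lemma in_loc_prime0 : in_loc_prime 0.
Proof.
exists 1; split; [exact: rc_one | exact: prime_idealRD_neq1 |].
by rewrite mulr0; apply: prime_idealRD0.
Qed.

Lemma in_loc_primeB u v : in_loc_prime u -> in_loc_prime v -> in_loc_prime (u - v).
Proof.
move=> [s [Rs nPs Psu]] [t [Rt nPt Ptv]]; exists (s * t); split.
- exact: rc_mul.
- by case/prime_idealRDM.
- have -> : s * t * (u - v) = t * (s * u) - s * (t * v).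
    by rewrite mulrBr [t * _]mulrCA !mulrA.
  by apply: prime_idealRDB; apply: prime_idealRDMl.
Qed.

Lemma in_loc_primeMl r u : RD r -> in_loc_prime u -> in_loc_prime (r * u).
Proof.
move=> Rr [s [Rs nPs Psu]]; exists s; split=> //.
by rewrite mulrCA; apply: prime_idealRDMl.
Qed.

Lemma in_loc_prime_neq1 : ~ in_loc_prime 1.
Proof. by case=> s [_ nPs]; rewrite mulr1. Qed.

Lemma factroid_loc_quot (x : D) : is_factroid (fun z => in_loc_prime (z%:F / x%:F)).
Proof.
have dvdl (f g : D) : g != 0 -> in_loc_prime ((f * g)%:F / x%:F) -> in_loc_prime (f%:F / x%:F).
  move=> g0 /(in_loc_primeMl (rc_gen g0)).
  by rewrite rmorphM /= mulrAC mulrC mulfK ?tofrac_eq0.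
split; first split.
- by rewrite rmorph0 mul0r; apply: in_loc_prime0.
- by move=> a b La Lb; rewrite rmorphB mulrBl; apply: in_loc_primeB.
- move=> f g f0 g0 Lfg; split; first exact: dvdl Lfg.
  by apply: (dvdl g f f0); rewrite [g * f]mulrC.
Qed.

Lemma L_of_prime_regular (H : D -> Prop) g y :
  (forall h, H h -> L_of P h) -> g != 0 ->
  factroid_gen (fun z => exists h, H h /\ z = g * h) (g * y) -> L_of P y.
Proof.
move=> HL g0 gHy; apply/L_ofE => y0 Py.
have gy0 : (g * y)%:F != 0 by rewrite tofrac_eq0 mulf_neq0.
apply: in_loc_prime_neq1; rewrite -(mulfV gy0).
apply: gHy (factroid_loc_quot (g * y)) _ => _ [h [Hh ->]].
have [->|h0] := eqVneq h 0; first by rewrite mulr0 rmorph0 mul0r; apply: in_loc_prime0.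
exists h%:F^-1; split; first exact: rc_gen.
  by have /L_ofE := HL h Hh; apply.
have -> : h%:F^-1 * ((g * h)%:F / (g * y)%:F) = y%:F^-1.
  by rewrite !rmorphM /= invfM mulrACA mulfV ?tofrac_eq0 // mul1r mulKf ?tofrac_eq0.
exact: Py.
Qed.

End PrimeIdeal.

Section UnionOfPrimes.
Variables (D : idomainType) (I : Type) (P : I -> {fraction D} -> Prop).
Variable S : {fraction D} -> Prop.
Hypothesis HP : forall i, prime_ideal_RD (P i).
Hypothesis HS : forall u, S u <-> exists i, P i u.

Lemma L_of_bigcup x : L_of S x <-> forall i, L_of (P i) x.
Proof.
split=> [/L_ofE LSx i | LPx]; apply/L_ofE => x0.
  by move=> Px; apply: LSx x0 _; apply/HS; exists i.
by case/HS=> i; have /L_ofE := LPx i; apply.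
Qed.

Lemma L_of_union_subring : is_subring (L_of S).
Proof.
split.
- by apply/L_of_bigcup => i; apply: L_of_prime1 (HP i).
- move=> x y /L_of_bigcup Lx /L_of_bigcup Ly; apply/L_of_bigcup => i.
  exact: (L_of_primeB (HP i) (Lx i) (Ly i)).
- move=> x y /L_of_bigcup Lx /L_of_bigcup Ly; apply/L_of_bigcup => i.
  exact: (L_of_primeM (HP i) (Lx i) (Ly i)).
Qed.

Lemma L_of_union_factroid : is_factroid (L_of S).
Proof.
have [_ LB _] := L_of_union_subring.
split; first by split; [right | exact: LB].
move=> f g f0 g0 /L_of_bigcup Lfg; split; apply/L_of_bigcup => i.
  exact: (L_of_prime_dvdl (HP i) g0 (Lfg i)).
by apply: (L_of_prime_dvdl (HP i) f0); rewrite mulrC.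
Qed.

Lemma L_of_union_regular : is_regular_factroid (L_of S).
Proof.
apply: regular_factroidP L_of_union_factroid _ => g g0 y gLy.
apply/L_of_bigcup => i; apply: (L_of_prime_regular (HP i) _ g0 gLy) => h /L_of_bigcup.
by apply.
Qed.

End UnionOfPrimes.

Theorem mainTheorem15 (D : idomainType) (S : {fraction D} -> Prop) :
  union_of_primes_RD S ->
  is_subring (L_of S) /\ is_regular_factroid (L_of S).
Proof.
case=> I [P [HP HS]]; split.
- exact: L_of_union_subring HP HS.
- exact: L_of_union_regular HP HS.
Qed.
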